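(* For the SSBM of the context with $k\ge2$ clusters of general sizes $(n_1,\dots,n_k)$ and aspect ratio $\rho$ satisfying $\sqrt\rho>1-\frac1{4k(2+\sqrt k)}$, it holds that $V_{k-1}(\mathcal L_{sym})=\Theta R_{k-1}$, where $R_{k-1}\in\mathbb R^{k\times(k-1)}$ consists of the $k-1$ smallest (orthonormal) eigenvectors of $\bar C$. Furthermore, $$\lambda_{n-k+1}(\mathcal L_{sym})-\lambda_{n-k+2}(\mathcal L_{sym})\ge\frac{1-2\eta}k.$$
   Context: SSBM: integers $n\ge2,k\ge2$, $p\in(0,1]$, $\eta\in[0,1/2)$, partition of $[n]$ into nonempty clusters $C_1,\dots,C_k$, $|C_i|=n_i$; edges present independently w.p. $p$, signed $+1$ within and $-1$ across clusters, signs flipped independently w.p. $\eta$. $A$ symmetric signed adjacency, $\bar D=\mathrm{diag}(|A|\mathbf1)$, $\bar d=p(n-1)$, $\mathcal L_{sym}=I-(\mathbb E\bar D)^{-1/2}\mathbb EA(\mathbb E\bar D)^{-1/2}$ with eigenvalues $\lambda_1\ge\dots\ge\lambda_n$. $\rho=\min_in_i/\max_in_i$. $\Theta_{ji}=1/\sqrt{n_i}$ if $j\in C_i$ else 0. $V_{k-1}(M)$: $n\times(k-1)$ matrix of orthonormal eigenvectors of the $k-1$ smallest eigenvalues. $\bar\alpha=1+\frac p{\bar d}(1-2\eta)$, $\bar C=\bar\alpha I_k-\bar B$ with $\bar B_{ii}=\frac{n_ip}{\bar d}(1-2\eta)$, $\bar B_{ii'}=-\frac{\sqrt{n_in_{i'}}p}{\bar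 d}(1-2\eta)$ for $i\ne i'$. *)

From mathcomp Require Import all_boot all_order all_algebra.
From mathcomp Require Import reals.
Set Implicit Arguments. Unset Strict Implicit. Unset Printing Implicit Defensive.
Import Order.TTheory GRing.Theory Num.Theory.
Local Open Scope ring_scope.

Section SSBM.
Variable R : realType.

Definition is_spectrum (N : nat) (M : 'M[R]_N) (s : seq R) : Prop :=
  [/\ size s = N, sorted (fun x y : R => y <= x) s
    & char_poly M = \prod_(x <- s) ('X - x%:P)].

(* V_m(M): N x m matrix of orthonormal eigenvectors associated with the m
   smallest eigenvalues; column j (0-indexed) is an eigenvector for the
   (j+1)-th smallest eigenvalue λ_{N-j}. *)
Definition is_V_smallest (N m : nat) (M : 'M[R]_N) (V : 'M[R]_(N, m)) : Prop :=
  exists s, is_spectrum M s /\ V^T *m V = 1%:M /\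
    forall j : 'I_m, M *m col j V = nth 0 s (N.-1 - j) *: col j V.

Definition csize (n k : nat) (c : 'I_n -> 'I_k) (i : 'I_k) : nat :=
  #|[set j | c j == i]|.

Definition aspect_ratio (n k : nat) (c : 'I_n -> 'I_k) : R :=
  (\big[minn/n]_(i : 'I_k) csize c i)%:R / (\max_(i : 'I_k) csize c i)%:R.

Definition Theta (n k : nat) (c : 'I_n -> 'I_k) : 'M[R]_(n, k) :=
  \matrix_(j, i) if c j == i then (Num.sqrt (csize c i)%:R)^-1 else 0.

(* Expectation of A_{jl} (j <> l): edge w.p. p, true sign s (+1 within,
   -1 across), flipped w.p. eta.  No self loops. *)
Definition EA (n k : nat) (c : 'I_n -> 'I_k) (p eta : R) : 'M[R]_n :=
  \matrix_(j, l)
    if j == l then 0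
    else let s : R := if c j == c l then 1 else -1 in
         p * ((1 - eta) * s + eta * (- s)).

Definition EabsA (n : nat) (p : R) : 'M[R]_n :=
  \matrix_(j, l) if j == l then 0 else p.

Definition EDbar (n : nat) (p : R) : 'M[R]_n :=
  diag_mx (\row_j \sum_l EabsA n p j l).

Definition Lsym (n k : nat) (c : 'I_n -> 'I_k) (p eta : R) : 'M[R]_n :=
  let Dm12 := diag_mx (\row_j (Num.sqrt (EDbar n p j j))^-1) in
  1%:M - Dm12 *m EA c p eta *m Dm12.

Definition dbar (n : nat) (p : R) : R := p * (n.-1)%:R.

Definition alphabar (n : nat) (p eta : R) : R := 1 + p / dbar n p * (1 - 2 * eta).

Definition Bbar (n k : nat) (c : 'I_n -> 'I_k) (p eta : R) : 'M[R]_k :=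
  \matrix_(i, i')
    if i == i' then (csize c i)%:R * p / dbar n p * (1 - 2 * eta)
    else - (Num.sqrt ((csize c i)%:R * (csize c i')%:R) * p / dbar n p * (1 - 2 * eta)).

Definition Cbar (n k : nat) (c : 'I_n -> 'I_k) (p eta : R) : 'M[R]_k :=
  (alphabar n p eta)%:M - Bbar c p eta.

End SSBM.

From mathcomp Require Import all_boot all_order all_algebra.
From mathcomp Require Import reals.
From mathcomp Require Import ring lra zify.
Set Implicit Arguments. Unset Strict Implicit. Unset Printing Implicit Defensive.
Import Order.TTheory GRing.Theory Num.Theory.
Local Open Scope ring_scope.

(* Let [T = Theta] and [al = alphabar]. Then [T^T T = 1] and
   [Lsym = al - T Bbar T^T], so [Lsym] acts as [Cbar = al - Bbar] on the range
   of [T] and as [al] on its orthogonal complement: the characteristic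
   polynomial of [Lsym] is [(X - al)^(n-k)] times that of [Cbar], and every
   eigenvector of [Lsym] for an eigenvalue other than [al] lies in the range
   of [T].
   With [s_i = sqrt n_i] and [g = (1 - 2 eta) / (n - 1)] we have
   [Bbar = g (2 diag(n_i) - s s^T)], so [x - Cbar] is a diagonal matrix minus
   a positive rank-one matrix and
   [det (x - Cbar) = prod_i (x - b_i) (1 - sum_i g n_i / (x - b_i))] with poles
   [b_i = al - 2 g n_i].  The aspect-ratio hypothesis is only used through
   [rho > 1/2], which gives [n < 2 k n_i] and puts every pole below
   [al - (1 - 2 eta) / k].  Beyond the poles the secular function is
   increasing, so [Cbar] has at most one eigenvalue above
   [al - (1 - 2 eta) / k]; it has one at least [al] since
   [det (al - Cbar) <= 0].  Hence the [k - 1] smallest eigenvalues of [Lsym]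
   are those of [Cbar], and the next one is at least [al]. *)

Lemma horner_char_poly (R : comNzRingType) n (A : 'M[R]_n) (x : R) :
  (char_poly A).[x] = \det (x%:M - A).
Proof.
rewrite -[_.[x]]/(horner_eval x (char_poly A)) /char_poly -det_map_mx.
congr (\det _); apply/matrixP => i j; rewrite !mxE /=.
by rewrite horner_evalE hornerD hornerN hornerMn hornerX hornerC.
Qed.

Lemma det_sylvester (R : comNzRingType) m n (A : 'M[R]_(m, n)) (B : 'M[R]_(n, m)) :
  \det (1%:M + A *m B) = \det (1%:M + B *m A).
Proof.
have eL : block_mx 1%:M (-A) B 1%:M =
    block_mx 1%:M 0 B 1%:M *m block_mx 1%:M (-A) 0 (1%:M + B *m A).
  rewrite mulmx_block !mul1mx ?mul0mx ?mulmx1 ?mulmx0 ?addr0 ?add0r.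
  by rewrite mulmxN addrCA addNr addr0.
have eR : block_mx 1%:M (-A) B 1%:M =
    block_mx (1%:M + A *m B) (-A) 0 1%:M *m block_mx 1%:M 0 B 1%:M.
  rewrite mulmx_block !mul1mx ?mul0mx ?mulmx1 ?mulmx0 ?addr0 ?add0r.
  by rewrite mulNmx addrK.
have := congr1 determinant eL; rewrite eR !det_mulmx.
by rewrite det_lblock !det_ublock !det1 !mul1r !mulr1.
Qed.

Lemma det_diag_sub_rank1 (R : fieldType) k (e u v : 'I_k -> R) :
  (forall i, e i != 0) ->
  \det (diag_mx (\row_i e i) - (\col_i u i) *m (\row_i v i)) =
  \prod_i e i * (1 - \sum_i u i * v i / e i).
Proof.
move=> e_neq0; set E := diag_mx _; set Einv := diag_mx (\row_i (e i)^-1).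
have EEinv : E *m Einv = 1%:M.
  rewrite mulmx_diag; apply/matrixP => i j; rewrite !mxE.
  by case: eqP => [->|]; rewrite ?mulr1n ?mulr0n ?divff.
have -> : E - (\col_i u i) *m (\row_i v i) =
    E *m (1%:M + (- (Einv *m \col_i u i)) *m \row_i v i).
  by rewrite mulmxDr mulmx1 mulNmx mulmxN !mulmxA EEinv mul1mx.
rewrite det_mulmx det_sylvester det_mx11 det_diag; congr (_ * _).
  by apply: eq_bigr => i _; rewrite mxE.
rewrite !mxE eqxx mulr1n -sumrN; congr (_ + _); apply: eq_bigr => i _.
by rewrite mxE mxE mul_diag_mx !mxE mulrN mulrCA mulrC (mulrC (v i)).
Qed.

Lemma poly_ext_gt (R : realFieldType) (p q : {poly R}) (b : R) :
  (forall x, b < x -> p.[x] = q.[x]) -> p = q.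
Proof.
move=> eq_pq; apply/eqP; rewrite -subr_eq0; apply/negPn/negP => pq_neq0.
set xs := [seq b + i.+1%:R | i <- iota 0 (size (p - q))].
have roots_xs : all (root (p - q)) xs.
  apply/allP => _ /mapP[i _ ->].
  by rewrite /root hornerD hornerN eq_pq ?subrr // ltrDl ltr0Sn.
have uniq_xs : uniq xs.
  rewrite map_inj_uniq ?iota_uniq // => i j /addrI /eqP.
  by rewrite eqr_nat => /eqP[].
by have := max_poly_roots pq_neq0 roots_xs uniq_xs; rewrite size_map size_iota ltnn.
Qed.

Lemma prod_XsubC_le0_root_ge (R : realDomainType) (t : seq R) (a : R) :
  (\prod_(x <- t) ('X - x%:P)).[a] <= 0 -> exists2 x, x \in t & a <= x.
Proof.
have [/hasP[x xt ax] _|/hasPn t_lt] := boolP (has (fun x => a <= x) t).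
  by exists x.
rewrite leNgt horner_prod big_seq prodr_gt0 // => x xt.
by rewrite hornerXsubC subr_gt0 ltNge t_lt.
Qed.

Lemma scalar_submxE (R : pzRingType) m (a : R) (M : 'M[R]_m) i j :
  (a%:M - M) i j = a *+ (i == j) - M i j.
Proof. by rewrite mxE [X in _ + X]mxE mxE. Qed.

Section SecularEquation.
Variables (R : realFieldType) (k : nat) (be ga : 'I_k -> R) (b : R) (p : {poly R}).
Hypotheses (k_gt0 : (0 < k)%N) (be_le : forall i, be i <= b) (ga_gt0 : forall i, 0 < ga i).
Hypothesis p_secular :
  forall x, b < x -> p.[x] = \prod_i (x - be i) * (1 - \sum_i ga i / (x - be i)).

Let sub_be_gt0 i x : b < x -> 0 < x - be i.
Proof. by move=> bx; rewrite subr_gt0 (le_lt_trans (be_le i)). Qed.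

(* Dividing out a root [t0 > b] uses [\sum_i ga i / (t0 - be i) = 1]; the
   quotient is a positive combination of the [\prod_(j != i) ('X - be j)],
   hence has no root beyond [b]. *)
Lemma secular_no_double_root_gt t0 t1 :
  b < t0 -> b < t1 -> ~~ (('X - t0%:P) * ('X - t1%:P) %| p).
Proof.
move=> b_t0 b_t1; apply/negP => /dvdpP[r p_eq].
have p_t0 : p.[t0] = 0 by rewrite p_eq !hornerM hornerXsubC subrr mul0r mulr0.
have sum_t0 : \sum_i ga i / (t0 - be i) = 1.
  move: p_t0; rewrite p_secular // => /eqP; rewrite mulf_eq0 subr_eq0.
  by rewrite gt_eqF ?prodr_gt0 // => [/eqP<-|i _]; last exact: sub_be_gt0.
pose w i := ga i / (t0 - be i).
set Q := \sum_i w i *: \prod_(j | j != i) ('X - (be j)%:P).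
have p_Q : p = ('X - t0%:P) * Q.
  apply: (@poly_ext_gt _ _ _ b) => x b_x.
  rewrite p_secular // hornerM hornerXsubC horner_sum.
  have -> : 1 - \sum_i ga i / (x - be i) = \sum_i (w i - ga i / (x - be i)).
    by rewrite sumrB sum_t0.
  rewrite !mulr_sumr; apply: eq_bigr => i _.
  rewrite hornerZ horner_prod (bigD1 i) //=.
  under [in RHS]eq_bigr do rewrite hornerXsubC.
  have := sub_be_gt0 i b_t0; have := sub_be_gt0 i b_x; rewrite /w.
  move: (\prod_(j | j != i) _) => P x_be t0_be; field.
  by rewrite !gt_eqF.
have Q_t1 : Q.[t1] = 0.
  have : ('X - t0%:P) * Q = ('X - t0%:P) * (r * ('X - t1%:P)).
    by rewrite -p_Q p_eq mulrCA mulrA.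
  move/(mulfI (monic_neq0 (monicXsubC t0))) ->.
  by rewrite hornerM hornerXsubC subrr mulr0.
have term_gt0 i : 0 < (w i *: \prod_(j | j != i) ('X - (be j)%:P)).[t1].
  rewrite hornerZ horner_prod mulr_gt0 ?divr_gt0 ?sub_be_gt0 //.
  by apply: prodr_gt0 => j _; rewrite hornerXsubC sub_be_gt0.
move: Q_t1; rewrite horner_sum => /psumr_eq0P/(_ (Ordinal k_gt0) isT) Q0.
by have := term_gt0 (Ordinal k_gt0); rewrite Q0 ?ltxx // => i _; exact/ltW.
Qed.

End SecularEquation.

Lemma col_mulmx (R : nzRingType) m l q (A : 'M[R]_(m, l)) (V : 'M[R]_(l, q)) j :
  col j (A *m V) = A *m col j V.
Proof. by rewrite !colE mulmxA. Qed.

Lemma col_matrixP (R : Type) m l (V W : 'M[R]_(m, l)) :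
  (forall j, col j V = col j W) -> V = W.
Proof.
by move=> eqVW; apply/matrixP => i j; have /matrixP/(_ i 0) := eqVW j; rewrite !mxE.
Qed.

Lemma nth_cons_nseq_cat (T : Type) (x0 a t0 : T) (t : seq T) m i :
  (0 < i)%N -> nth x0 (t0 :: nseq m a ++ t) (m + i) = nth x0 (t0 :: t) i.
Proof.
by case: i => // i _; rewrite addnS /= nth_cat size_nseq ltnNge leq_addr addKn.
Qed.

Section Spectrum.
Variable R : realType.

Lemma is_spectrum_uniq N (M : 'M[R]_N) s s' :
  is_spectrum M s -> is_spectrum M s' -> s = s'.
Proof.
case=> _ sorted_s chi_s [_ sorted_s' chi_s'].
apply: (sorted_eq ge_trans ge_anti) => //.
by apply: prod_XsubC_eq; rewrite -chi_s -chi_s'.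
Qed.

Lemma is_spectrum_dvdp N m (M : 'M[R]_N) (C : 'M[R]_m) s :
  char_poly C %| char_poly M -> is_spectrum M s -> exists t, is_spectrum C t.
Proof.
move=> dvd_CM [_ _ chi_s]; rewrite chi_s in dvd_CM.
have [msk] := dvdp_prod_XsubC dvd_CM.
rewrite eqp_monic ?char_poly_monic ?monic_prod_XsubC // => /eqP chi_C.
exists (sort (fun x y : R => y <= x) (mask msk s)); split.
- by have := size_char_poly C; rewrite chi_C size_prod_XsubC size_sort => -[].
- by apply: sort_sorted => x y; rewrite orbC le_total.
- by rewrite chi_C; apply: perm_big; rewrite perm_sym perm_sort.
Qed.

End Spectrum.

Section OrthonormalCompression.
Variables (R : realType) (n k : nat) (T : 'M[R]_(n, k)) (B : 'M[R]_k) (al : R).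
Hypotheses (T_orthonormal : T^T *m T = 1%:M) (k_gt0 : (0 < k)%N) (k_le_n : (k <= n)%N).

Let L := al%:M - T *m B *m T^T.
Let C := al%:M - B.

Lemma compression_mulmx : L *m T = T *m C.
Proof.
by rewrite mulmxBl mulmxBr mul_scalar_mx mul_mx_scalar -!mulmxA T_orthonormal mulmx1.
Qed.

Lemma mulmx_compression : T^T *m L = C *m T^T.
Proof.
by rewrite mulmxBl mulmxBr mul_scalar_mx mul_mx_scalar !mulmxA T_orthonormal mul1mx.
Qed.

Lemma compression_eigenvector_range (v : 'cV[R]_n) lam :
  L *m v = lam *: v -> lam != al -> T *m (T^T *m v) = v.
Proof.
move=> eig_v lam_neq_al.
have v_range : (al - lam) *: v = T *m (B *m T^T *m v).
  by rewrite scalerBl -eig_v mulmxBl mul_scalar_mx -!mulmxA opprB addrC subrK.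
have -> : v = T *m ((al - lam)^-1 *: (B *m T^T *m v)).
  by rewrite -scalemxAr -v_range scalerA mulVf ?scale1r // subr_eq0 eq_sym.
by rewrite [T^T *m (T *m _)]mulmxA T_orthonormal mul1mx.
Qed.

Lemma char_poly_compression : char_poly L = ('X - al%:P) ^+ (n - k) * char_poly C.
Proof.
apply: (@poly_ext_gt _ _ _ al) => x al_x.
rewrite hornerM horner_exp hornerXsubC !horner_char_poly.
have x_al_neq0 : x - al != 0 by rewrite subr_eq0 gt_eqF.
have shift m (M : 'M[R]_m) : x%:M - (al%:M - M) = (x - al) *: (1%:M + (x - al)^-1 *: M).
  rewrite scalerDr scalemx1 scalerA mulfV // scale1r opprB addrA addrAC.
  by congr (_ + _); apply/matrixP => i j; rewrite !mxE mulrnBl.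
rewrite !shift -!mulmxA !detZ scalemxAl det_sylvester -scalemxAr.
by rewrite -mulmxA T_orthonormal mulmx1 mulrA -exprD subnK.
Qed.

Hypothesis C_split :
  forall t0 t, is_spectrum C (t0 :: t) -> al <= t0 /\ all (fun x => x < al) t.

Lemma is_spectrum_compression t0 t :
  is_spectrum C (t0 :: t) -> is_spectrum L (t0 :: nseq (n - k) al ++ t).
Proof.
move=> spec_C; have [al_t0 t_lt] := C_split spec_C.
case: spec_C => size_t sorted_t chi_C; split.
- by move: size_t; rewrite /= size_cat size_nseq /=; lia.
- case: (n - k)%N => [//|m] /=; rewrite al_t0 /=.
  elim: m => [|m IH] /=; last by rewrite lexx.
  rewrite (path_sortedE ge_trans) (path_sorted sorted_t) andbT.
  by apply: sub_all t_lt => x /ltW.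
- rewrite char_poly_compression chi_C !big_cons big_cat mulrCA; congr (_ * (_ * _)).
  by elim: (n - k)%N => [|m IH]; rewrite ?big_nil ?expr0 // big_cons -IH exprS.
Qed.

Lemma is_spectrum_compressionP s : is_spectrum L s ->
  exists t0 t, is_spectrum C (t0 :: t) /\ s = t0 :: nseq (n - k) al ++ t.
Proof.
move=> spec_L; have dvd_CL : char_poly C %| char_poly L.
  by rewrite char_poly_compression dvdp_mulIr.
have [[|t0 t] spec_C] := is_spectrum_dvdp dvd_CL spec_L.
  by case: spec_C => /= k0; exfalso; move: k_gt0; rewrite -k0.
by exists t0, t; split; last exact: is_spectrum_uniq spec_L (is_spectrum_compression spec_C).
Qed.

Let nth_compression t0 t j : is_spectrum C (t0 :: t) -> (j < k.-1)%N ->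
  nth 0 (t0 :: nseq (n - k) al ++ t) (n.-1 - j) = nth 0 (t0 :: t) (k.-1 - j) /\
  nth 0 (t0 :: t) (k.-1 - j) < al.
Proof.
move=> spec_C j_lt; have [_ t_lt] := C_split spec_C.
case: spec_C => size_t _ _; rewrite /= in size_t.
have -> : (n.-1 - j = (n - k) + (k.-1 - j))%N by lia.
rewrite nth_cons_nseq_cat; last by lia.
split=> //; have -> : (k.-1 - j = (k.-1 - j).-1.+1)%N by lia.
(* The goal and [size_t] mention [size t] at two convertible but syntactically
   different element types, which [lia] would take for distinct atoms. *)
by apply: (all_nthP 0 t_lt); move: (size t) size_t => m; lia.
Qed.

Lemma is_V_smallest_compression (V : 'M[R]_(n, k.-1)) :
  is_V_smallest L V <-> exists Rm : 'M[R]_(k, k.-1), is_V_smallest C Rm /\ V = T *m Rm.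
Proof.
split.
  case=> s [spec_L [VV eig_V]].
  have [t0 [t [spec_C s_eq]]] := is_spectrum_compressionP spec_L; subst s.
  have V_range : V = T *m (T^T *m V).
    apply: col_matrixP => j; rewrite !col_mulmx.
    have [eq_nth lt_al] := nth_compression spec_C (ltn_ord j).
    apply/esym/(compression_eigenvector_range (lam := nth 0 (t0 :: t) (k.-1 - j))).
      by rewrite eig_V eq_nth.
    by rewrite lt_eqF.
  exists (T^T *m V); split=> //; exists (t0 :: t); split=> //; split.
    by rewrite trmx_mul trmxK -mulmxA -V_range.
  move=> j; have [eq_nth _] := nth_compression spec_C (ltn_ord j).
  by rewrite col_mulmx mulmxA -mulmx_compression -mulmxA eig_V eq_nth -scalemxAr.
case=> Rm [[[|t0 t] [spec_C [RR eig_R]]] ->].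
  by case: spec_C => /= k0; exfalso; move: k_gt0; rewrite -k0.
exists (t0 :: nseq (n - k) al ++ t); split; first exact: is_spectrum_compression.
split; first by rewrite trmx_mul mulmxA -[_ *m T^T *m T]mulmxA T_orthonormal mulmx1.
move=> j; have [eq_nth _] := nth_compression spec_C (ltn_ord j).
by rewrite col_mulmx mulmxA compression_mulmx -mulmxA eig_R eq_nth scalemxAr.
Qed.

End OrthonormalCompression.

Section Clusters.
Variables (n k : nat) (c : 'I_n -> 'I_k).

Lemma surj_csize_gt0 : (forall i, exists j, c j = i) -> forall i, (0 < csize c i)%N.
Proof. by move=> c_surj i; have [j cj] := c_surj i; apply/card_gt0P; exists j; rewrite inE cj. Qed.

Lemma sum_csize : (\sum_i csize c i)%N = n.
Proof.
rewrite -[RHS]card_ord -sum1_card (partition_big c xpredT) //=.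
by apply: eq_bigr => i _; rewrite /csize -sum1_card; apply: eq_bigl => j; rewrite inE.
Qed.

Lemma sum_cluster_const (V : nmodType) i (a : V) :
  \sum_j (if c j == i then a else 0) = a *+ csize c i.
Proof. by rewrite -big_mkcond /= sumr_const /csize cardsE. Qed.

End Clusters.

Section Theta.
Variables (R : realType) (n k : nat) (c : 'I_n -> 'I_k).
Hypothesis csize_gt0 : forall i, (0 < csize c i)%N.

Let s i : R := Num.sqrt (csize c i)%:R.

Lemma Theta_mulmx m (M : 'M[R]_(k, m)) j i : (Theta R c *m M) j i = (s (c j))^-1 * M (c j) i.
Proof.
rewrite mxE (bigD1 (c j)) //= big1 ?addr0 => [|i' ne_i']; rewrite !mxE ?eqxx //.
by rewrite eq_sym (negbTE ne_i') mul0r.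
Qed.

Lemma Theta_conj (M : 'M[R]_k) j l :
  (Theta R c *m M *m (Theta R c)^T) j l = (s (c j))^-1 * M (c j) (c l) * (s (c l))^-1.
Proof.
rewrite -mulmxA Theta_mulmx -[M *m _]trmxK trmx_mul trmxK mxE Theta_mulmx mxE.
by rewrite [_ * M _ _]mulrC mulrA.
Qed.

Lemma Theta_orthonormal : (Theta R c)^T *m Theta R c = 1%:M.
Proof.
apply/matrixP => i i'; rewrite !mxE.
under eq_bigr => j _ do rewrite !mxE.
have [<-|ne_i'] := eqVneq i i'.
  rewrite mulr1n (eq_bigr (fun j => if c j == i then (s i)^-1 ^+ 2 else 0)).
    have s2 : s i ^+ 2 = (csize c i)%:R by rewrite sqr_sqrtr ?ler0n.
    rewrite sum_cluster_const -mulr_natl -s2 exprVn mulfV // expf_neq0 //.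
    by rewrite sqrtr_eq0 -ltNge ltr0n.
  by move=> j _; case: ifP; rewrite ?mul0r.
rewrite mulr0n big1 // => j _; case: eqVneq => [cj|]; last by rewrite mul0r.
by rewrite cj (negbTE ne_i') mulr0.
Qed.

End Theta.

Lemma aspect_ratio_csize_gt (R : realType) n k (c : 'I_n -> 'I_k) :
  (2 <= k)%N -> (forall i, (0 < csize c i)%N) ->
  1 - 1 / (4 * k%:R * (2 + Num.sqrt k%:R)) < Num.sqrt (aspect_ratio R c) ->
  forall i, n%:R < 2 * k%:R * (csize c i)%:R :> R.
Proof.
rewrite /aspect_ratio => k_ge2 csize_gt0 rho_gt i.
set a := (\big[minn/n]_j csize c j)%N; set b := (\max_j csize c j)%N.
have a_le : (a <= csize c i)%N by have := bigmin_le n i (csize c); rewrite minEnat.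
have b_gt0 : (0 < b)%N := leq_trans (csize_gt0 i) (leq_bigmax i).
have n_le : (n <= k * b)%N.
  rewrite -(sum_csize c) -[k in (k * _)%N]card_ord -sum_nat_const.
  by apply: leq_sum => j _; exact: leq_bigmax.
have k_ge2R : 2 <= k%:R :> R by rewrite (ler_nat R 2 k).
have b_lt : b%:R < 2 * a%:R :> R.
  have sqrt_k_ge0 := sqrtr_ge0 (k%:R : R); have sqrt_rho_ge0 := sqrtr_ge0 (a%:R / b%:R : R).
  have b_gt0R : 0 < b%:R :> R by rewrite ltr0n.
  have rho_sqr : Num.sqrt (a%:R / b%:R) ^+ 2 = a%:R / b%:R :> R.
    by rewrite sqr_sqrtr // divr_ge0.
  have denom_ge : 1 / (4 * k%:R * (2 + Num.sqrt k%:R)) <= 1 / 16 :> R.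
    by rewrite !div1r lef_pV2 ?posrE; nra.
  have rho_gt_half : 1 / 2 < a%:R / b%:R :> R by rewrite -rho_sqr; nra.
  by move: rho_gt_half; rewrite ltr_pdivlMr //; lra.
have n_leR : n%:R <= k%:R * b%:R :> R by rewrite -natrM ler_nat.
have a_leR : a%:R <= (csize c i)%:R :> R by rewrite ler_nat.
nra.
Qed.

Section ExpectedLaplacian.
Variables (R : realType) (n k : nat) (c : 'I_n -> 'I_k) (p eta : R).
Hypotheses (n_ge2 : (2 <= n)%N) (p_gt0 : 0 < p) (csize_gt0 : forall i, (0 < csize c i)%N).

Let s i : R := Num.sqrt (csize c i)%:R.
Let al := alphabar n p eta.

Let n1_gt0 : 0 < (n.-1)%:R :> R.
Proof. by rewrite ltr0n; case: n n_ge2 => [|[]]. Qed.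

Let s_neq0 i : s i != 0.
Proof. by rewrite sqrtr_eq0 -ltNge ltr0n. Qed.

Let sqr_s i : s i ^+ 2 = (csize c i)%:R.
Proof. by rewrite sqr_sqrtr ?ler0n. Qed.

Lemma Lsym_Theta :
  Lsym c p eta = al%:M - Theta R c *m Bbar c p eta *m (Theta R c)^T.
Proof.
have row_sum j : \sum_l EabsA n p j l = dbar n p.
  rewrite (bigD1 j) //= mxE eqxx add0r (eq_bigr (fun _ => p)) => [|l ne_lj].
    by rewrite sumr_const cardC1 card_ord /dbar mulr_natr.
  by rewrite mxE eq_sym (negbTE ne_lj).
have d_gt0 : 0 < dbar n p by rewrite mulr_gt0.
have scale x : (Num.sqrt (dbar n p))^-1 * x * (Num.sqrt (dbar n p))^-1 = x / dbar n p.
  by rewrite mulrAC -expr2 exprVn sqr_sqrtr ?ltW // mulrC.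
apply/matrixP => j l; rewrite /Lsym !scalar_submxE Theta_conj mul_mx_diag mul_diag_mx.
rewrite !mxE !eqxx !mulr1n !row_sum scale /al /alphabar /dbar.
have [n1_neq0 p_neq0] := (lt0r_neq0 n1_gt0, lt0r_neq0 p_gt0).
have [<-|ne_jl] := eqVneq j l.
  by rewrite /= eqxx !mulr1n -/(s _) -sqr_s; field; rewrite s_neq0 n1_neq0 p_neq0.
rewrite /= !mulr0n !sub0r; congr (- _).
have [cjl|ne_cjl] := eqVneq (c j) (c l).
  by rewrite -cjl -/(s _) -sqr_s; field; rewrite s_neq0 n1_neq0 p_neq0.
by rewrite sqrtrM ?ler0n // -/(s _) -/(s _); field; rewrite !s_neq0 n1_neq0 p_neq0.
Qed.

Let ga i : R := (1 - 2 * eta) / (n.-1)%:R * (csize c i)%:R.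
Let pole i : R := al - 2 * ga i.

Lemma horner_char_Cbar x : (forall i, x != pole i) ->
  (char_poly (Cbar c p eta)).[x] =
  \prod_i (x - pole i) * (1 - \sum_i ga i / (x - pole i)).
Proof.
move=> x_neq_pole; rewrite horner_char_poly; pose cc := (1 - 2 * eta) / (n.-1)%:R.
have [n1_neq0 p_neq0] := (lt0r_neq0 n1_gt0, lt0r_neq0 p_gt0).
have -> : x%:M - Cbar c p eta =
    diag_mx (\row_i (x - pole i)) - (\col_i (cc * s i)) *m (\row_i s i).
  apply/matrixP => i i'; rewrite /Cbar !scalar_submxE !mxE big_ord1 !mxE.
  rewrite sqrtrM ?ler0n // /pole /ga /al /alphabar /dbar /cc -/(s i) -/(s i') -sqr_s.
  have [<-|ne_ii'] := eqVneq i i'.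
    by rewrite /= !mulr1n; field; rewrite n1_neq0 p_neq0.
  by rewrite /= !mulr0n; field; rewrite n1_neq0 p_neq0.
rewrite det_diag_sub_rank1 => [|i]; last by rewrite subr_eq0.
congr (_ * (1 - _)); apply: eq_bigr => i _.
by rewrite /ga -sqr_s expr2 mulrA.
Qed.

Hypotheses (k_ge2 : (2 <= k)%N) (eta_lt : eta < 1 / 2).
Hypothesis csize_large : forall i, n%:R < 2 * k%:R * (csize c i)%:R :> R.

Let gap : R := (1 - 2 * eta) / k%:R.

Let eta_factor_gt0 : 0 < 1 - 2 * eta.
Proof. by have := eta_lt; lra. Qed.

Let gap_gt0 : 0 < gap.
Proof. by rewrite divr_gt0 // ltr0n ltnW. Qed.

Let ga_gt0 i : 0 < ga i.
Proof. by rewrite /ga mulr_gt0 ?divr_gt0 // ltr0n. Qed.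

Lemma pole_le_gap i : pole i <= al - gap.
Proof.
have n1_lt : (n.-1)%:R < 2 * k%:R * (csize c i)%:R :> R.
  by apply: le_lt_trans (csize_large i); rewrite ler_nat leq_pred.
have k_gt0 : 0 < k%:R :> R by rewrite ltr0n ltnW.
rewrite /pole lerD2l lerN2 -subr_ge0 /ga /gap.
have -> : 2 * ((1 - 2 * eta) / n.-1%:R * (csize c i)%:R) - (1 - 2 * eta) / k%:R =
    (1 - 2 * eta) * (2 * k%:R * (csize c i)%:R - n.-1%:R) / (n.-1%:R * k%:R).
  by field; rewrite !lt0r_neq0.
by rewrite divr_ge0 ?mulr_ge0 ?ltW // subr_gt0.
Qed.

Lemma horner_char_Cbar_alphabar : (char_poly (Cbar c p eta)).[al] <= 0.
Proof.
have al_pole i : al - pole i = 2 * ga i by rewrite /pole opprB addrC subrK.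
rewrite horner_char_Cbar => [|i]; last by rewrite -subr_eq0 al_pole mulf_neq0 ?lt0r_neq0.
apply: mulr_ge0_le0; first by apply: prodr_ge0 => i _; rewrite al_pole mulr_ge0 ?ltW.
rewrite subr_le0 (eq_bigr (fun=> 1 / 2)) => [|i _]; last first.
  by rewrite al_pole; field; rewrite lt0r_neq0.
by rewrite sumr_const card_ord -mulr_natr; move: k_ge2; rewrite -(ler_nat R); lra.
Qed.

Lemma Cbar_spectrum_gap t0 t1 t : is_spectrum (Cbar c p eta) [:: t0, t1 & t] ->
  al <= t0 /\ t1 <= al - gap.
Proof.
case=> _ sorted_t chi_C; split.
  have [|x x_t al_x] := @prod_XsubC_le0_root_ge _ [:: t0, t1 & t] al.
    by rewrite -chi_C horner_char_Cbar_alphabar.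
  apply: le_trans al_x _; move: x_t; rewrite inE => /predU1P[-> //|x_t].
  by move: sorted_t => /(order_path_min ge_trans)/allP; apply.
rewrite leNgt; apply/negP => gap_t1.
have gap_t0 : al - gap < t0 by apply: lt_le_trans gap_t1 _; case/andP: sorted_t.
have secular x : al - gap < x -> (char_poly (Cbar c p eta)).[x] =
    \prod_i (x - pole i) * (1 - \sum_i ga i / (x - pole i)).
  move=> gap_x; apply: horner_char_Cbar => i.
  by rewrite gt_eqF // (le_lt_trans (pole_le_gap i)).
have := secular_no_double_root_gt (ltnW k_ge2) pole_le_gap ga_gt0 secular gap_t0 gap_t1.
by rewrite chi_C !big_cons mulrA dvdp_mulr.
Qed.

Lemma Cbar_spectrum_split t0 t : is_spectrum (Cbar c p eta) (t0 :: t) ->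
  al <= t0 /\ all (fun x => x < al) t.
Proof.
case: t => [|t1 t] spec_C.
  by case: spec_C => /= k1; exfalso; move: k_ge2; rewrite -k1.
have [al_t0 t1_le] := Cbar_spectrum_gap spec_C; split=> //.
case: spec_C => _ /= /andP[_ sorted_t] _.
have lt_al x : x <= t1 -> x < al.
  by move=> x_t1; apply: (le_lt_trans (le_trans x_t1 t1_le)); rewrite ltrBlDr ltrDl.
by rewrite /= lt_al //=; apply: sub_all (order_path_min ge_trans sorted_t) => x /lt_al.
Qed.

End ExpectedLaplacian.

Theorem mainTheorem17 (R : realType) (n k : nat) (p eta : R)
  (c : 'I_n -> 'I_k)
  (hn : (2 <= n)%N) (hk : (2 <= k)%N)
  (hp : 0 < p <= 1) (heta : 0 <= eta < 1 / 2)
  (hc : forall i : 'I_k, exists j : 'I_n, c j = i)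
  (hrho : 1 - 1 / (4 * k%:R * (2 + Num.sqrt k%:R)) < Num.sqrt (aspect_ratio R c)) :
  (forall V : 'M[R]_(n, k.-1),
     is_V_smallest (Lsym c p eta) V <->
     exists Rm : 'M[R]_(k, k.-1),
       is_V_smallest (Cbar c p eta) Rm /\ V = Theta R c *m Rm)
  /\
  (forall s : seq R, is_spectrum (Lsym c p eta) s ->
     (1 - 2 * eta) / k%:R <= nth 0 s (n - k) - nth 0 s (n - k + 1)).
Proof.
case/andP: hp => p_gt0 _; case/andP: heta => _ eta_lt.
have csize_gt0 := surj_csize_gt0 hc.
have k_le_n : (k <= n)%N.
  by rewrite -(sum_csize c) -[k in (k <= _)%N]card_ord -sum1_card leq_sum.
have csize_large := aspect_ratio_csize_gt hk csize_gt0 hrho.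
have C_split := Cbar_spectrum_split hn p_gt0 csize_gt0 hk eta_lt csize_large.
have T_orthonormal := Theta_orthonormal R csize_gt0.
rewrite (Lsym_Theta eta hn p_gt0 csize_gt0).
split=> [V|s spec_L].
  exact: is_V_smallest_compression T_orthonormal (ltnW hk) k_le_n C_split V.
have [t0 [[|t1 t] [spec_C ->]]] :=
  is_spectrum_compressionP T_orthonormal (ltnW hk) k_le_n C_split spec_L.
  by case: spec_C => /= k1; exfalso; move: hk; rewrite -k1.
have [al_t0 t1_le] := Cbar_spectrum_gap hn p_gt0 csize_gt0 hk eta_lt csize_large spec_C.
set al := alphabar n p eta in al_t0 t1_le *.
have al_le : al <= nth 0 (t0 :: nseq (n - k) al ++ t1 :: t) (n - k).
  by case: (n - k)%N => [|m] //=; elim: m.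
by rewrite nth_cons_nseq_cat //= lerBrDr -lerBrDl (le_trans t1_le) // lerB.
Qed.
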